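(* Let $q$ be a prime power and let $n\le m$ and $k\le n$ be positive integers. Let $\alpha_0,\dots,\alpha_{n-1}\in\mathbb F_{q^m}$ be linearly independent over $\mathbb F_q$, and let $\mathcal G$ be the Gabidulin code $$\mathcal G=\{(f(\alpha_0),\dots,f(\alpha_{n-1})) : f(x)=\textstyle\sum_{i} f_i x^{q^i},\ f_i\in\mathbb F_{q^m},\ \deg_q f<k\},$$ which has minimum rank distance $d=n-k+1$. Let $\tau<d$. Then there exists a word $\mathbf r\in\mathbb F_{q^m}^n$ such that the maximum list size $\ell=\ell(m,n,d,\tau)=\max_{\mathbf y\in\mathbb F_{q^m}^n}|\mathcal G\cap\mathcal B_\tau(\mathbf y)|$ satisfies $$\ell\ \ge\ |\mathcal G\cap\mathcal S_\tau(\mathbf r)|\ \ge\ \frac{\binom{n}{n-\tau}_q}{(q^m)^{n-\tau-k}}\ \ge\ q^m\, q^{\tau(m+n)-\tau^2-md},$$ and in the special case $n=m$, $\ell\ge q^n q^{2n\tau-\tau^2-nd}$.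
   Context: Fixing a basis of $\mathbb F_{q^m}$ over $\mathbb F_q$, each vector $\mathbf x\in\mathbb F_{q^m}^n$ is identified with an $m\times n$ matrix over $\mathbb F_q$; $\mathrm{rk}(\mathbf x)$ denotes the rank of this matrix, and the rank distance is $d_R(\mathbf x,\mathbf y)=\mathrm{rk}(\mathbf x-\mathbf y)$. $\mathcal B_\tau(\mathbf a)=\{\mathbf x\in\mathbb F_{q^m}^n:\mathrm{rk}(\mathbf x-\mathbf a)\le\tau\}$ and $\mathcal S_\tau(\mathbf a)=\{\mathbf x:\mathrm{rk}(\mathbf x-\mathbf a)=\tau\}$. For a linearized polynomial $f(x)=\sum_i f_i x^{q^i}$, $\deg_q f$ is the largest $i$ with $f_i\neq0$. The Gaussian binomial is $\binom{n}{r}_q=\prod_{i=0}^{r-1}\frac{q^n-q^i}{q^r-q^i}$. *)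

From HB Require Import structures.
From mathcomp Require Import all_boot all_order all_algebra all_field.
Set Implicit Arguments. Unset Strict Implicit. Unset Printing Implicit Defensive.
Import Order.TTheory GRing.Theory Num.Theory.
Local Open Scope ring_scope.

(* F plays the role of F_q; L0 is a finite-dimensional extension of F
   (F_{q^m}, m = \dim {:L0}); finvect_type L0 is the same field equipped
   with its canonical finType structure (so that we can count). *)
Section RankMetric.
Variables (F : finFieldType) (L0 : fieldExtType F).
Local Notation L := (finvect_type L0).

Definition word_mx n (x : 'rV[L]_n) : 'M[F]_(\dim {:L}, n) :=
  \matrix_(i < \dim {:L}, j < n) coord (vbasis {:L}) i (x ord0 j).

Definition rk n (x : 'rV[L]_n) : nat := \rank (word_mx x).

Definition rball n (a : 'rV[L]_n) (tau : nat) : {set 'rV[L]_n} :=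
  [set x | rk (x - a) <= tau]%N.

Definition rsphere n (a : 'rV[L]_n) (tau : nat) : {set 'rV[L]_n} :=
  [set x | rk (x - a) == tau].

Definition gabidulin (q n k : nat) (alpha : 'I_n -> L) : {set 'rV[L]_n} :=
  [set \row_(j < n) \sum_(i < k) f i * alpha j ^+ (q ^ i) | f : {ffun 'I_k -> L}].

Definition max_list_size n (C : {set 'rV[L]_n}) (tau : nat) : nat :=
  \max_(y : 'rV[L]_n) #|C :&: rball y tau|.

End RankMetric.

Definition gauss_binom (q n r : nat) : rat :=
  \prod_(i < r) (((q ^ n)%:R - (q ^ i)%:R) / ((q ^ r)%:R - (q ^ i)%:R)).

From HB Require Import structures.
From mathcomp Require Import all_boot all_order all_algebra all_field.
From mathcomp Require Import zify ring.
Set Implicit Arguments. Unset Strict Implicit. Unset Printing Implicit Defensive.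
Import Order.TTheory GRing.Theory Num.Theory.
Local Open Scope ring_scope.

(* Put s = n - tau and V = <<alpha>>.  Each s-dimensional subspace U of V is
   the zero set of a unique monic q-polynomial
   P_U(x) = x^(q^s) - sum_(i<s) g_i x^(q^i), and there are [n choose s]_q of
   them.  The word (P_U(alpha_j))_j has rank n - s = tau, because the kernel of
   P_U on V is U.  By pigeonhole on the top s - k coefficients g_i, at least
   [n choose s]_q / (q^m)^(s-k) of these polynomials share them; for each such
   P_U the Gabidulin codeword of its k low coefficients lies at rank distance
   exactly tau from the word r made of x^(q^s) and the shared coefficients, and
   different U give different codewords.  Finally [n choose s]_q >= q^(s(n-s)). *)

Lemma pigeonhole_fiber (T U : finType) (u0 : U) (A : {set T}) (h : T -> U) :
  exists u, (#|A| <= #|U| * #|[set x in A | h x == u]|)%N.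
Proof.
have [u _ u_max] := arg_maxnP (fun u => #|[set x in A | h x == u]|) (isT : predT u0).
exists u; rewrite -sum1_card (partition_big h xpredT) //= -sum_nat_const.
by apply: leq_sum => v _; rewrite sum1dep_card; apply: u_max.
Qed.

Lemma card_rowspace (F : finFieldType) p r (M : 'M[F]_(p, r)) :
  #|[set u : 'rV[F]_r | (u <= M)%MS]| = (#|F| ^ \rank M)%N.
Proof.
rewrite -[\rank M]mul1n -card_mx -(card_imset _ (row_free_inj (row_base_free M))).
apply: eq_card => u; rewrite inE -(eq_row_base M).
by apply/idP/imsetP => [/submxP[w ->] | [w _ ->]]; [exists w | rewrite submxMl].
Qed.

Lemma gauss_binomE (q n s : nat) : (1 < q)%N -> (s <= n)%N ->
  gauss_binom q n s =
  (\prod_(i < s) (q ^ n - q ^ i))%N%:R / (\prod_(i < s) (q ^ s - q ^ i))%N%:R.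
Proof.
move=> q_gt1 le_sn; rewrite /gauss_binom !natr_prod -prodf_div.
apply: eq_bigr => i _; have le_is : (i <= s)%N := ltnW (ltn_ord i).
by rewrite !natrB // leq_pexp2l ?(ltnW q_gt1) // (leq_trans le_is).
Qed.

Lemma gauss_binom_ge (q n s : nat) : (1 < q)%N -> (s <= n)%N ->
  (q%:R : rat) ^+ ((n - s) * s) <= gauss_binom q n s.
Proof.
move=> q_gt1 le_sn; rewrite /gauss_binom exprM.
have -> : ((q%:R : rat) ^+ (n - s)) ^+ s = \prod_(i < s) (q%:R : rat) ^+ (n - s).
  by rewrite prodr_const card_ord.
apply: ler_prod => i _; rewrite exprn_ge0 ?ler0n //=.
have q_gt0 : (0 < q)%N := ltnW q_gt1.
have lt_qi_qs : (q ^ i < q ^ s)%N by rewrite ltn_exp2l.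
have le_qi_qn : (q ^ i <= q ^ n)%N by rewrite leq_pexp2l // (leq_trans (ltnW (ltn_ord i))).
rewrite ler_pdivlMr ?subr_gt0 ?ltr_nat // -!natrB ?(ltnW lt_qi_qs) //.
rewrite -natrX -natrM ler_nat mulnBr -expnD subnK //.
by apply: leq_sub2l; rewrite -expnD leq_pexp2l // leq_addl.
Qed.

Lemma gauss_binom_div_ge (q m n k tau : nat) : (1 < q)%N -> (tau + k <= n)%N ->
  (q ^ m)%:R * (q%:R : rat) ^ ((tau * (m + n))%:Z - (tau ^ 2)%:Z - (m * (n - k + 1))%:Z)
  <= gauss_binom q n (n - tau) / ((q ^ m) ^ (n - tau - k))%:R.
Proof.
move=> q_gt1 /subnKC; move: (n - (tau + k))%N => e <-.
have -> : (tau + k + e - tau = k + e)%N by lia.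
have -> : (k + e - k = e)%N by lia.
have -> : (tau + k + e - k + 1 = tau + e + 1)%N by lia.
have -> : ((tau * (m + (tau + k + e)))%:Z - (tau ^ 2)%:Z - (m * (tau + e + 1))%:Z =
           (tau * (k + e))%:Z - (m * e + m)%:Z)%R by rewrite !(PoszD, PoszM); ring.
have q_neq0 : (q%:R : rat) != 0 by rewrite pnatr_eq0 -lt0n ltnW.
rewrite expfzDr // -exprnN -[_ ^ (tau * (k + e))%:Z]/(_ ^+ (tau * (k + e))).
have -> : (q ^ m)%:R * ((q%:R : rat) ^+ (tau * (k + e)) / q%:R ^+ (m * e + m))
    = q%:R ^+ (tau * (k + e)) / ((q ^ m) ^ e)%:R.
  by rewrite !natrX -exprM exprD; field; rewrite !expf_neq0.
rewrite ler_wpM2r ?invr_ge0 ?ler0n //.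
have := gauss_binom_ge q_gt1 (leq_addl tau (k + e)).
by rewrite addnK addnA.
Qed.

Section QLinearized.
Variables (F : finFieldType) (L0 : fieldExtType F).
Local Notation L := (finvect_type L0).
Local Notation q := #|F|.

Lemma q_gt1 : (1 < q)%N. Proof. exact: card_finNzRing_gt1. Qed.

Definition qpow (i : nat) (x : L) : L := x ^+ (q ^ i).

Lemma qpow_is_linear i : linear (qpow i).
Proof.
have [p p_prime pcharFp] := finPcharP F.
have pcharLp : p \in [pchar L] by rewrite (pchar_lalg L).
have qi_pnat : [pchar L].-nat (q ^ i)%N.
  rewrite (eq_pnat _ (pcharf_eq pcharLp)) (card_pprimeChar pcharFp) -expnM.
  by rewrite pnatX pnat_id.
have expF a : a ^+ (q ^ i) = a :> F.
  by elim: i {qi_pnat} => // i IHi; rewrite expnSr exprM IHi expf_card.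
move=> a x y; rewrite /qpow exprDn_pchar //; congr (_ + _).
by rewrite -mulr_algl exprMn -in_algE -rmorphXn expF mulr_algl.
Qed.

HB.instance Definition _ i :=
  GRing.isLinear.Build F L L *:%R (qpow i) (qpow_is_linear i).

Definition qpoly s (c : {ffun 'I_s -> L}) (x : L) : L :=
  \sum_(i < s) c i * qpow i x.

Lemma qpoly_is_linear s (c : {ffun 'I_s -> L}) : linear (qpoly c).
Proof.
move=> a x y; rewrite /qpoly scaler_sumr -big_split; apply: eq_bigr => i _.
by rewrite linearP mulrDr scalerAr.
Qed.

HB.instance Definition _ s c :=
  GRing.isLinear.Build F L L *:%R (@qpoly s c) (qpoly_is_linear c).

Lemma qpolyB s (c c' : {ffun 'I_s -> L}) x : qpoly (c - c') x = qpoly c x - qpoly c' x.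
Proof. by rewrite /qpoly -sumrB; apply: eq_bigr => i _; rewrite !ffunE mulrBl. Qed.

Definition monic_qpoly s (g : {ffun 'I_s -> L}) (x : L) : L := qpow s x - qpoly g x.

Lemma monic_qpoly_is_linear s (g : {ffun 'I_s -> L}) : linear (monic_qpoly g).
Proof.
move=> a x y; rewrite /monic_qpoly (linearP (qpow s)) (linearP (qpoly g)).
by rewrite scalerBr opprD addrACA.
Qed.

HB.instance Definition _ s g :=
  GRing.isLinear.Build F L L *:%R (@monic_qpoly s g) (monic_qpoly_is_linear g).

Lemma linear_span_eq0 (f : {linear L -> L}) (X : seq L) :
  {in X, forall x, f x = 0} -> {in <<X>>%VS, forall w, f w = 0}.
Proof.
move=> f0 w /(@coord_span _ _ _ (in_tuple X)) ->; rewrite linear_sum big1 // => i _.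
by rewrite linearZ /= f0 ?scaler0 // mem_nth.
Qed.

Lemma card_finvect : #|L| = (q ^ \dim {:L})%N.
Proof. by rewrite -card_vspace; apply: eq_card => x; rewrite memvf. Qed.

Lemma card_sphere_le_max_list_size n (C : {set 'rV[L]_n}) (r : 'rV[L]_n) tau :
  (#|C :&: rsphere r tau| <= max_list_size C tau)%N.
Proof.
apply: leq_trans (leq_bigmax r); apply/subset_leq_card/setIS/subsetP => x.
by rewrite !inE => /eqP->.
Qed.

Definition qpoly_poly s (c : {ffun 'I_s -> L}) : {poly L} := \sum_(i < s) c i *: 'X^(q ^ i).

Lemma horner_qpolyP s (c : {ffun 'I_s -> L}) x : (qpoly_poly c).[x] = qpoly c x.
Proof.
by rewrite horner_sum; apply: eq_bigr => i _; rewrite hornerZ hornerXn.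
Qed.

Lemma coef_qpolyP s (c : {ffun 'I_s -> L}) j :
  (qpoly_poly c)`_j = \sum_(i < s) c i * (j == q ^ i)%N%:R.
Proof. by rewrite coef_sum; apply: eq_bigr => i _; rewrite coefZ coefXn. Qed.

Lemma coef_qpolyP_exp s (c : {ffun 'I_s -> L}) (j : 'I_s) : (qpoly_poly c)`_(q ^ j)%N = c j.
Proof.
rewrite coef_qpolyP (bigD1 j) //= eqxx mulr1 big1 ?addr0 // => i ij.
by rewrite eqn_exp2l ?q_gt1 // eq_sym (negPf (ij : val i != val j)) mulr0.
Qed.

Lemma size_qpolyP s (c : {ffun 'I_s -> L}) : (size (qpoly_poly c) <= (q ^ s.-1).+1)%N.
Proof.
apply/leq_sizeP => j lt_j; rewrite coef_qpolyP big1 // => i _.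
suff /negPf-> : j != (q ^ i)%N by rewrite mulr0.
rewrite neq_ltn (leq_trans _ lt_j) ?orbT // ltnS leq_exp2l ?q_gt1 //.
by rewrite -ltnS prednK ?(leq_ltn_trans _ (ltn_ord i)).
Qed.

Lemma card_roots_le (p : {poly L}) (S : {pred L}) d : p != 0 ->
  (size p <= d.+1)%N -> {in S, forall x, root p x} -> (#|S| <= d)%N.
Proof.
move=> p_neq0 size_p rootS; rewrite -ltnS (leq_trans _ size_p) // cardE.
by apply: max_poly_roots; rewrite ?enum_uniq //; apply/allP => x; rewrite mem_enum; apply: rootS.
Qed.

Lemma qpoly_eq0 s (c : {ffun 'I_s -> L}) (S : {pred L}) :
  (q ^ s <= #|S|)%N -> {in S, forall x, qpoly c x = 0} -> c = 0.
Proof.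
move=> cardS c0; apply/ffunP => i; rewrite ffunE; apply: contraTeq cardS => ci_neq0.
have p_neq0 : qpoly_poly c != 0.
  by apply: contraNneq ci_neq0 => p0; rewrite -coef_qpolyP_exp p0 coef0.
have rootS : {in S, forall x, root (qpoly_poly c) x}.
  by move=> x xS; rewrite rootE horner_qpolyP c0.
rewrite -ltnNge (leq_ltn_trans (card_roots_le p_neq0 (size_qpolyP c) rootS)) //.
by rewrite ltn_exp2l ?q_gt1 // ltn_predL (leq_ltn_trans _ (ltn_ord i)).
Qed.

Lemma card_monic_qpoly_zeros s (g : {ffun 'I_s -> L}) (S : {pred L}) :
  {in S, forall x, monic_qpoly g x = 0} -> (#|S| <= q ^ s)%N.
Proof.
move=> g0; pose p := 'X^(q ^ s) - qpoly_poly g.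
have p_neq0 : p != 0.
  apply/eqP => /(congr1 (fun p : {poly L} => p`_(q ^ s)%N)) /eqP.
  rewrite coefB coefXn eqxx coef_qpolyP big1 ?subr0 ?coef0 ?oner_eq0 // => i _.
  by rewrite eqn_exp2l ?q_gt1 // gtn_eqF // mulr0.
apply: (card_roots_le p_neq0).
  rewrite (leq_trans (size_polyD _ _)) // size_polyN geq_max size_polyXn leqnn.
  rewrite (leq_trans (size_qpolyP g)) // ltnS leq_exp2l ?q_gt1 ?leq_pred //.
by move=> x xS; rewrite rootE !hornerE horner_qpolyP -/(qpow s x) -/(monic_qpoly g x) g0.
Qed.

Lemma card_span_free s (t : s.-tuple L) : free t -> #|<<t>>%VS| = (q ^ s)%N.
Proof. by move=> /eqP t_free; rewrite card_vspace t_free size_tuple. Qed.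

Lemma qpoly_inj_span s (c c' : {ffun 'I_s -> L}) (X : seq L) :
  (q ^ s <= #|<<X>>%VS|)%N -> {in X, qpoly c =1 qpoly c'} -> c = c'.
Proof.
move=> cardX eqX; apply/eqP; rewrite -subr_eq0; apply/eqP/(qpoly_eq0 cardX).
by apply: (linear_span_eq0 (f := qpoly (c - c'))) => x Xx /=; rewrite qpolyB eqX ?subrr.
Qed.

Lemma monic_qpoly_inj_span s (g g' : {ffun 'I_s -> L}) (X : seq L) :
  (q ^ s <= #|<<X>>%VS|)%N -> {in X, monic_qpoly g =1 monic_qpoly g'} -> g = g'.
Proof. by move=> cardX eqX; apply: (qpoly_inj_span cardX) => x /eqX /subrI. Qed.

(* Meaningful for free [t] only: otherwise [pick] may fail and return 0. *)
Definition subspace_coefs s (t : s.-tuple L) : {ffun 'I_s -> L} :=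
  odflt 0 [pick g | [forall i, monic_qpoly g (tnth t i) == 0]].

Lemma subspace_coefs_vanish s (t : s.-tuple L) : free t ->
  forall i, monic_qpoly (subspace_coefs t) (tnth t i) = 0.
Proof.
move=> t_free; rewrite /subspace_coefs; case: pickP => [g /forallP g0 i | no_g].
  exact/eqP.
pose eval_t (c : {ffun 'I_s -> L}) := [ffun i => qpoly c (tnth t i)].
have eval_t_inj : injective eval_t.
  move=> c c' /ffunP eq_c; apply: (qpoly_inj_span (X := t)).
    by rewrite card_span_free.
  by move=> x /tnthP[i ->]; have := eq_c i; rewrite !ffunE.
have [eval_t_inv _ eval_t_invK] := injF_bij eval_t_inj.
set g := eval_t_inv [ffun i => qpow s (tnth t i)].
have /negbT/negP[] := no_g g; apply/forallP => i.
have := congr1 (fun y : {ffun 'I_s -> L} => y i) (eval_t_invK [ffun i => qpow s (tnth t i)]).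
by rewrite !ffunE /monic_qpoly => ->; rewrite subrr.
Qed.

Lemma monic_qpoly_subspace_coefs_eq0 s (t : s.-tuple L) w : free t ->
  (monic_qpoly (subspace_coefs t) w == 0) = (w \in <<t>>%VS).
Proof.
move=> t_free; set Z := [pred w | monic_qpoly (subspace_coefs t) w == 0].
have span0 : {in <<t>>%VS, forall x, monic_qpoly (subspace_coefs t) x = 0}.
  by apply: linear_span_eq0 => x /tnthP[i ->]; apply: subspace_coefs_vanish.
have span_sub_Z : <<t>>%VS \subset Z by apply/subsetP => x /span0 x0; rewrite inE x0.
have card_Z : #|<<t>>%VS| = #|Z|.
  apply/eqP; rewrite eqn_leq subset_leq_card // card_span_free //=.
  by apply: (card_monic_qpoly_zeros (g := subspace_coefs t) (S := Z)) => x /eqP.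
by rewrite ((subset_cardP card_Z) span_sub_Z w) inE.
Qed.

Definition free_tuples (W : {vspace L}) s :=
  [set t : s.-tuple L | free t && all (mem W) t].

Lemma card_free_extensions (W : {vspace L}) s (t : s.-tuple L) :
  t \in free_tuples W s ->
  #|[pred x | (x \in W) && free (x :: t)]| = (q ^ \dim W - q ^ s)%N.
Proof.
rewrite inE => /andP[t_free /allP tW].
have span_t_W : (<<t>> <= W)%VS by apply/span_subvP.
have -> : #|[pred x | (x \in W) && free (x :: t)]| = #|[predD W & <<t>>%VS]|.
  by apply: eq_card => x; rewrite !inE free_cons t_free andbT andbC.
have capE : #|[predI W & <<t>>%VS]| = #|<<t>>%VS|.
  by apply: eq_card => x; rewrite !inE andb_idl // => /(subvP span_t_W).
by rewrite -(card_span_free t_free) -card_vspace -(cardID <<t>>%VS W) capE addKn.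
Qed.

Lemma card_free_tuples (W : {vspace L}) s :
  #|free_tuples W s| = (\prod_(i < s) (q ^ \dim W - q ^ i))%N.
Proof.
elim: s => [|s IHs].
  by rewrite big_ord0 (@eq_card1 _ [tuple]) // => t; rewrite inE tuple0 inE /= nil_free.
rewrite big_ord_recr /= -IHs -sum_nat_const -sum1_card.
rewrite (partition_big (fun u : s.+1.-tuple L => [tuple of behead u])
                       (mem (free_tuples W s))) /=; last first.
  by move=> u; rewrite !inE [u]tuple_eta /= free_cons => /andP[/andP[_ ->] /andP[_ ->]].
apply: eq_bigr => t tW; rewrite -(card_free_extensions tW) sum1dep_card.
have cons_inj : injective (fun x => [tuple of x :: t]) by move=> x y [].
rewrite -(card_imset _ cons_inj); apply: eq_card => u; rewrite inE.
apply/andP/imsetP => [[] | [x xt ->]].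
  case/tupleP: u => x u'; rewrite inE /= => /andP[u_free /andP[xW _]] /eqP tu.
  have {tu} <- : u' = t by apply: val_inj; rewrite -tu.
  by exists x; rewrite // inE xW.
move: xt tW; rewrite !inE /= => /andP[xW x_free] /andP[_ tW].
by rewrite x_free xW tW; split => //; apply/eqP/val_inj.
Qed.

Definition subspace_polys (W : {vspace L}) s :=
  [set subspace_coefs t | t in free_tuples W s].

Lemma subspace_coefs_fiber (W : {vspace L}) s (t0 : s.-tuple L) :
  t0 \in free_tuples W s ->
  [set t in free_tuples W s | subspace_coefs t == subspace_coefs t0] =
  free_tuples <<t0>> s.
Proof.
rewrite inE => /andP[t0_free /allP t0W].
have span_t0_W : (<<t0>> <= W)%VS by apply/span_subvP.
have zero_on_t0 (t : s.-tuple L) x : free t -> x \in <<t>>%VS ->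
    monic_qpoly (subspace_coefs t) x = 0.
  by move=> t_free xt; apply/eqP; rewrite monic_qpoly_subspace_coefs_eq0.
apply/setP => t; rewrite !inE.
apply/andP/andP => [[/andP[t_free _] /eqP eq_g] | [t_free /allP t_t0]].
  split=> //; apply/allP => x xt /=.
  by rewrite -monic_qpoly_subspace_coefs_eq0 // -eq_g zero_on_t0 ?memv_span.
split; first by rewrite t_free; apply/allP => x /t_t0 /(subvP span_t0_W).
apply/eqP/(monic_qpoly_inj_span (X := t)); first by rewrite card_span_free.
by move=> x xt; rewrite (zero_on_t0 t) ?memv_span // zero_on_t0 //; apply: t_t0.
Qed.

Lemma card_subspace_polys (W : {vspace L}) s :
  (#|subspace_polys W s| * \prod_(i < s) (q ^ s - q ^ i))%N =
  (\prod_(i < s) (q ^ \dim W - q ^ i))%N.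
Proof.
rewrite -card_free_tuples -[#|free_tuples W s|]sum1_card.
rewrite (partition_big_imset (@subspace_coefs s)) /=.
rewrite -sum_nat_const; apply: eq_bigr => _ /imsetP[t0 t0W ->].
rewrite sum1dep_card subspace_coefs_fiber // card_free_tuples.
by move: t0W; rewrite inE => /andP[/eqP-> _]; rewrite size_tuple.
Qed.

Lemma mul_word_mx_tr n (x : 'rV[L]_n) (u : 'rV[F]_n) :
  u *m (word_mx x)^T = passmx.rVof (vbasis {:L}) (\sum_j u 0 j *: x 0 j).
Proof.
apply/rowP => i; rewrite !mxE linear_sum; apply: eq_bigr => j _.
by rewrite linearZ !mxE.
Qed.

Lemma card_word_relations n (x : 'rV[L]_n) :
  #|[set u : 'rV[F]_n | \sum_j u 0 j *: x 0 j == 0]| = (q ^ (n - rk x))%N.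
Proof.
rewrite /rk -mxrank_tr -mxrank_ker -card_rowspace; apply: eq_card => u.
by rewrite !inE sub_kermx mul_word_mx_tr passmx.rVof_eq0 // vbasisP.
Qed.

Lemma rk_opp n (x : 'rV[L]_n) : rk (- x) = rk x.
Proof.
rewrite /rk -mxrank_opp; congr (\rank _); apply/matrixP => i j.
by rewrite !mxE (linearN (coord _ i)) opprK.
Qed.

Section EvaluationWords.
Variables (n : nat) (alpha : 'I_n -> L).
Hypothesis alpha_free : free [seq alpha j | j : 'I_n].
Local Notation V := <<[seq alpha j | j : 'I_n]>>%VS.

Lemma dim_span_alpha : \dim V = n.
Proof. by move/eqP: alpha_free; rewrite size_map size_enum_ord. Qed.

Lemma card_span_kernel (f : {linear L -> L}) :
  #|[set w | (w \in V) && (f w == 0)]| = (q ^ (n - rk (\row_j f (alpha j))))%N.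
Proof.
pose X := [tuple alpha j | j < n].
have X_alpha (j : 'I_n) : X`_j = alpha j by rewrite -tnth_nth tnth_mktuple.
pose comb (u : 'rV[F]_n) := \sum_j u 0 j *: alpha j.
have combE u : comb u = \sum_(j < n) u 0 j *: X`_j.
  by apply: eq_bigr => j _; rewrite X_alpha.
have comb_inj : injective comb.
  move=> u u' /(congr1 (coord X _)) eq_c; apply/rowP => j.
  by have := eq_c j; rewrite !combE !coord_sum_free.
have f_comb u : f (comb u) = \sum_j u 0 j *: (\row_j f (alpha j)) 0 j.
  by rewrite linear_sum; apply: eq_bigr => j _; rewrite linearZ mxE.
rewrite -card_word_relations -(card_imset _ comb_inj); apply: eq_card => w.
rewrite !inE; apply/andP/imsetP => [[wV /eqP fw0] | [u]]; last first.
  rewrite inE -f_comb => fu0 ->; split=> //.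
  by apply: rpred_sum => j _; rewrite rpredZ // memv_span ?map_f ?mem_enum.
have w_comb : w = comb (\row_j coord X j w).
  have wX : w \in <<X>>%VS by [].
  by rewrite combE {1}(coord_span wX); apply: eq_bigr => j _; rewrite mxE.
by exists (\row_j coord X j w); rewrite // inE -f_comb -w_comb fw0.
Qed.

Lemma card_subspace_polys_gauss s : (s <= n)%N ->
  (#|subspace_polys V s|)%:R = gauss_binom q n s.
Proof.
move=> le_sn; rewrite gauss_binomE ?q_gt1 //.
have := card_subspace_polys V s; rewrite dim_span_alpha => <-.
rewrite natrM mulfK // pnatr_eq0 -lt0n prodn_gt0 // => i.
by rewrite subn_gt0 ltn_exp2l ?q_gt1.
Qed.

Lemma rk_monic_qpoly_subspace_coefs s (t : s.-tuple L) : t \in free_tuples V s ->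
  rk (\row_j monic_qpoly (subspace_coefs t) (alpha j)) = (n - s)%N.
Proof.
move=> tV; have := card_span_kernel (monic_qpoly (subspace_coefs t)).
move: tV; rewrite inE => /andP[t_free /allP t_V].
have span_t_V : (<<t>> <= V)%VS by apply/span_subvP.
rewrite (eq_card (B := mem <<t>>%VS)) ?card_span_free //; last first.
  by move=> w; rewrite !inE monic_qpoly_subspace_coefs_eq0 // andb_idl // => /(subvP span_t_V).
by move/(expnI q_gt1) => s_eq; rewrite [in RHS]s_eq subKn // rank_leq_col.
Qed.

Lemma monic_qpoly_inj_alpha s (g g' : {ffun 'I_s -> L}) : (s <= n)%N ->
  (forall j, monic_qpoly g (alpha j) = monic_qpoly g' (alpha j)) -> g = g'.
Proof.
move=> le_sn eq_g; apply: (monic_qpoly_inj_span (X := [seq alpha j | j : 'I_n])).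
  by rewrite card_vspace dim_span_alpha leq_exp2l ?q_gt1.
by move=> _ /mapP[j _ ->].
Qed.

Section ListDecoding.
Variables (k e : nat).
Hypothesis le_ke_n : (k + e <= n)%N.

Definition low_coefs (g : {ffun 'I_(k + e) -> L}) : {ffun 'I_k -> L} :=
  [ffun i => g (lshift e i)].

Definition high_coefs (g : {ffun 'I_(k + e) -> L}) : {ffun 'I_e -> L} :=
  [ffun i => g (rshift k i)].

Lemma qpoly_split (g : {ffun 'I_(k + e) -> L}) x :
  qpoly g x = qpoly (low_coefs g) x + \sum_(i < e) high_coefs g i * qpow (k + i) x.
Proof.
by rewrite /qpoly big_split_ord; congr (_ + _); apply: eq_bigr => i _; rewrite ffunE.
Qed.

Lemma exists_rich_sphere : exists r : 'rV[L]_n,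
  (#|subspace_polys V (k + e)| <=
   #|L| ^ e * #|gabidulin q k alpha :&: rsphere r (n - (k + e))|)%N.
Proof.
set P := subspace_polys V (k + e).
have [h h_rich] := pigeonhole_fiber (0 : {ffun 'I_e -> L}) P high_coefs.
rewrite card_ffun card_ord in h_rich.
pose r : 'rV[L]_n :=
  \row_j (qpow (k + e) (alpha j) - \sum_(i < e) h i * qpow (k + i) (alpha j)).
exists r; apply: leq_trans h_rich _; rewrite leq_mul2l; apply/orP; right.
pose word (g : {ffun 'I_(k + e) -> L}) : 'rV[L]_n :=
  \row_j qpoly (low_coefs g) (alpha j).
have word_sub_r g : g \in [set g in P | high_coefs g == h] ->
    word g - r = - \row_j monic_qpoly g (alpha j).
  rewrite inE => /andP[_ /eqP high_g]; apply/rowP => j.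
  by rewrite !mxE /monic_qpoly (qpoly_split g) high_g; ring.
have word_inj : {in [set g in P | high_coefs g == h] &, injective word}.
  move=> g g' gC g'C eq_w; apply: (monic_qpoly_inj_alpha le_ke_n) => j.
  have := word_sub_r g gC; rewrite eq_w word_sub_r // => /oppr_inj/rowP/(_ j).
  by rewrite !mxE.
rewrite -(card_in_imset word_inj); apply/subset_leq_card/subsetP => _ /imsetP[g gC ->].
rewrite !inE; apply/andP; split; first by apply/imsetP; exists (low_coefs g).
move: (gC); rewrite inE => /andP[/imsetP[t tV g_t] _].
by rewrite word_sub_r // rk_opp g_t rk_monic_qpoly_subspace_coefs.
Qed.
End ListDecoding.

End EvaluationWords.
End QLinearized.

Theorem theorem1 (F : finFieldType) (L0 : fieldExtType F) (q m n k d tau : nat)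
  (hq : #|F| = q) (hm : \dim {:L0} = m)
  (hn0 : (0 < n)%N) (hnm : (n <= m)%N) (hk0 : (0 < k)%N) (hkn : (k <= n)%N)
  (alpha : 'I_n -> finvect_type L0)
  (halpha : free [seq alpha j | j : 'I_n])
  (hd : d = (n - k + 1)%N) (htau : (tau < d)%N) :
  let G := gabidulin q k alpha in
  let ell := max_list_size G tau in
  (exists r : 'rV[finvect_type L0]_n,
    [/\ (#|G :&: rsphere r tau| <= ell)%N,
        gauss_binom q n (n - tau) / ((q ^ m) ^ (n - tau - k))%:R
          <= (#|G :&: rsphere r tau|)%:R
      & (q ^ m)%:R * (q%:R : rat) ^ ((tau * (m + n))%:Z - (tau ^ 2)%:Z - (m * d)%:Z)
          <= gauss_binom q n (n - tau) / ((q ^ m) ^ (n - tau - k))%:R]) /\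
  (n = m ->
    (q ^ n)%:R * (q%:R : rat) ^ ((2 * n * tau)%:Z - (tau ^ 2)%:Z - (n * d)%:Z)
      <= (ell%:R : rat)).
Proof.
move=> G ell; subst q d.
have le_tk_n : (tau + k <= n)%N by lia.
set e := (n - tau - k)%N; have s_ke : (n - tau = k + e)%N by lia.
have le_ke_n : (k + e <= n)%N by rewrite -s_ke leq_subr.
have [r r_rich] := exists_rich_sphere halpha le_ke_n.
have le_tau_n : (tau <= n)%N by lia.
have card_L : #|finvect_type L0| = (#|F| ^ m)%N by rewrite -hm; exact: card_finvect.
rewrite -s_ke subKn // card_L in r_rich.
have sphere_ge : gauss_binom #|F| n (n - tau) / ((#|F| ^ m) ^ e)%:R <=
                 (#|G :&: rsphere r tau|)%:R.
  rewrite -(card_subspace_polys_gauss halpha) ?leq_subr //.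
  have q_gt0 : (0 < #|F|)%N := ltnW (q_gt1 F).
  by rewrite ler_pdivrMr ?ltr0n ?expn_gt0 ?q_gt0 // -natrM ler_nat mulnC.
have bound := gauss_binom_div_ge m (q_gt1 F) le_tk_n.
have ell_ge := card_sphere_le_max_list_size G r tau.
split; first by exists r.
move=> eq_nm; apply: le_trans (_ : (#|G :&: rsphere r tau|)%:R <= _); last by rewrite ler_nat.
apply: le_trans sphere_ge; apply: le_trans bound; rewrite -eq_nm.
by have -> : (2 * n * tau = tau * (n + n))%N by lia.
Qed.
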